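(* Assume (A1) and fix all parameters except $\omega$ (so $E=\mu\sigma(1-2b^2\beta)$ is fixed). Let $\Omega=\{\omega\in[0,1]:\ \text{conditions (C1)--(C4) hold}\}$. Then $\Omega$ is a (possibly empty) subinterval of $[0,1]$. Moreover each of the following occurs for suitable values of the fixed parameters satisfying (A1): $\Omega=\emptyset$ (unconditionally unstable); $\Omega=[0,1]$ (unconditionally stable); $\Omega=[0,\bar\omega)$ with $\bar\omega\in(0,1)$ (destabilizing); $\Omega=(\bar\omega,1]$ with $\bar\omega\in(0,1)$ (stabilizing); $\Omega=(\omega_a,\omega_b)$ with $0<\omega_a<\omega_b<1$ (mixed).
   Context: Parameters: $c\in(0,1)$, $\gamma>0$, $\omega\in[0,1]$, $h>0$, $d>0$, $\sigma>0$, $\mu>0$, $b>0$, $\beta>0$, and $E=\mu\sigma(1-2b^2\beta)$. Assumption (A1): $1-c-hd>0$. Conditions (C1)--(C4) are: (C1) $E>0$; (C2) $(2-E)(1+c+2\gamma)-\omega^2dhE>0$; (C3) $1-c+cE+\omega^2dhE+\gamma c-E\gamma-E\gamma c+E^2\gamma-E^2\gamma^2+E\gamma^2-\gamma>0$; (C4) $2\gamma+c-cE-\gamma E-\omega^2dhE<3$. These are the conditions guaranteeing that all eigenvalues of the Jacobian matrix $\begin{pmatrix}c+\gamma&\omega h&-\gamma\\ \omega dE&1-E&0\\1&0&0\end{pmatrix}$ (the Jacobian, at the unbiased steady state $S^*$, of the model map) lie in the open unit disk. *)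

From Stdlib Require Import Reals Lra.
Open Scope R_scope.

Definition Eval (sigma mu b beta : R) : R := mu * sigma * (1 - 2 * b ^ 2 * beta).

Definition params_ok (c gamma h d sigma mu b beta : R) : Prop :=
  0 < c < 1 /\ 0 < gamma /\ 0 < h /\ 0 < d /\ 0 < sigma /\ 0 < mu /\
  0 < b /\ 0 < beta /\
  (* (A1) *) 1 - c - h * d > 0.

Definition C1 (E : R) : Prop := E > 0.
Definition C2 (c gamma omega h d E : R) : Prop :=
  (2 - E) * (1 + c + 2 * gamma) - omega ^ 2 * d * h * E > 0.
Definition C3 (c gamma omega h d E : R) : Prop :=
  1 - c + c * E + omega ^ 2 * d * h * E + gamma * c - E * gamma - E * gamma * c
  + E ^ 2 * gamma - E ^ 2 * gamma ^ 2 + E * gamma ^ 2 - gamma > 0.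
Definition C4 (c gamma omega h d E : R) : Prop :=
  2 * gamma + c - c * E - gamma * E - omega ^ 2 * d * h * E < 3.

Definition inOmega (c gamma h d sigma mu b beta omega : R) : Prop :=
  let E := Eval sigma mu b beta in
  0 <= omega <= 1 /\ C1 E /\ C2 c gamma omega h d E /\
  C3 c gamma omega h d E /\ C4 c gamma omega h d E.

Definition is_interval (P : R -> Prop) : Prop :=
  forall x y z, P x -> P z -> x <= y <= z -> P y.

From Pilot Require Import Defs.
From Stdlib Require Import Reals Lra Psatz.
Open Scope R_scope.

(* Conditions (C2)--(C4) depend on omega only through the term
   omega^2 d h E, and each of them is a one-sided linear bound on it: (C2) bounds
   it from above, (C3) and (C4) from below.  Once (C1) gives E > 0 this term is
   nondecreasing in omega on [0,1], so Omega is the preimage of an open window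
   under a monotone map, hence an interval.  Each of the five shapes of Omega is
   then realised by explicit parameters: the empty one by E < 0, the others by
   choosing the window endpoints to be squares of rationals times d h E. *)

Definition C2_bound (c gamma E : R) : R := (2 - E) * (1 + c + 2 * gamma).

Definition C3_bound (c gamma E : R) : R :=
  - (1 - c + c * E + gamma * c - E * gamma - E * gamma * c
     + E ^ 2 * gamma - E ^ 2 * gamma ^ 2 + E * gamma ^ 2 - gamma).

Definition C4_bound (c gamma E : R) : R := 2 * gamma + c - c * E - gamma * E - 3.

Lemma inOmega_iff_window c gamma h d sigma mu b beta omega :
  let E := Eval sigma mu b beta in
  inOmega c gamma h d sigma mu b beta omega <->
  Defs.C1 E /\ 0 <= omega <= 1 /\
  Rmax (C3_bound c gamma E) (C4_bound c gamma E) < omega ^ 2 * (d * h * E)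
    < C2_bound c gamma E.
Proof.
  intros E.
  unfold inOmega, Defs.C2, Defs.C3, Defs.C4, C2_bound, C3_bound, C4_bound; fold E.
  rewrite Rmax_Rlt; split.
  - intros (Homega & HE & H2 & H3 & H4); repeat split; auto; lra.
  - intros (HE & Homega & (H3 & H4) & H2); repeat split; auto; lra.
Qed.

Lemma is_interval_nondecreasing_window (f : R -> R) (lo hi : R) :
  (forall x y, 0 <= x <= y -> f x <= f y) ->
  is_interval (fun x => 0 <= x <= 1 /\ lo < f x < hi).
Proof.
  intros Hf x y z [Hx Hfx] [Hz Hfz] Hxyz.
  assert (f x <= f y) by (apply Hf; lra).
  assert (f y <= f z) by (apply Hf; lra).
  split; lra.
Qed.

Lemma pow2_scale_nondecreasing (K x y : R) :
  0 <= K -> 0 <= x <= y -> x ^ 2 * K <= y ^ 2 * K.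
Proof. intros HK Hxy; apply Rmult_le_compat_r; [exact HK | nra]. Qed.

Lemma inOmega_is_interval c gamma h d sigma mu b beta :
  params_ok c gamma h d sigma mu b beta ->
  is_interval (inOmega c gamma h d sigma mu b beta).
Proof.
  intros Hp x y z Hx Hz Hxyz.
  destruct Hp as (_ & _ & Hh & Hd & _).
  set (E := Eval sigma mu b beta) in *.
  rewrite inOmega_iff_window in *; fold E in Hx, Hz |- *.
  destruct Hx as [HE Hx]; destruct Hz as [_ Hz].
  split; [exact HE |].
  apply (is_interval_nondecreasing_window (fun w => w ^ 2 * (d * h * E))) with x z;
    auto.
  intros u v Huv; apply pow2_scale_nondecreasing; [| exact Huv].
  unfold Defs.C1 in HE.
  apply Rlt_le, Rmult_lt_0_compat; [apply Rmult_lt_0_compat |]; lra.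
Qed.

Lemma Omega_empty_example :
  params_ok (1/2) 1 (1/10) 1 1 1 1 1 /\
  forall omega, ~ inOmega (1/2) 1 (1/10) 1 1 1 1 1 omega.
Proof.
  split; [unfold params_ok; lra |].
  intros omega H; rewrite inOmega_iff_window in H.
  destruct H as [HE _]; unfold Defs.C1, Eval in HE; lra.
Qed.

Lemma Omega_full_example :
  params_ok (1/2) (1/2) (1/10) (1/10) 1 2 (1/2) 1 /\
  forall omega, inOmega (1/2) (1/2) (1/10) (1/10) 1 2 (1/2) 1 omega <->
                0 <= omega <= 1.
Proof.
  split; [unfold params_ok; lra |].
  intros omega; rewrite inOmega_iff_window, Rmax_Rlt.
  unfold Defs.C1, C2_bound, C3_bound, C4_bound, Eval; split.
  - intros (_ & Homega & _); exact Homega.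
  - intros Homega; assert (0 <= omega ^ 2 <= 1) by nra.
    repeat split; lra.
Qed.

Lemma Omega_destabilizing_example :
  params_ok (1/10) (1/10) (26/95) 1 1 (19/5) (1/2) 1 /\
  forall omega, inOmega (1/10) (1/10) (26/95) 1 1 (19/5) (1/2) 1 omega <->
                0 <= omega < 1/2.
Proof.
  split; [unfold params_ok; lra |].
  intros omega; rewrite inOmega_iff_window, Rmax_Rlt.
  unfold Defs.C1, C2_bound, C3_bound, C4_bound, Eval; split.
  - intros (_ & Homega & _ & Hup); split; nra.
  - intros Homega; assert (0 <= omega ^ 2 < 1/4) by nra.
    repeat split; lra.
Qed.

Lemma Omega_stabilizing_example :
  params_ok (1/20) (11/10) (353/500) 1 1 (4/5) (1/2) 1 /\
  forall omega, inOmega (1/20) (11/10) (353/500) 1 1 (4/5) (1/2) 1 omega <->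
                1/2 < omega <= 1.
Proof.
  split; [unfold params_ok; lra |].
  intros omega; rewrite inOmega_iff_window, Rmax_Rlt.
  unfold Defs.C1, C2_bound, C3_bound, C4_bound, Eval; split.
  - intros (_ & Homega & (Hlow & _) & _); split; nra.
  - intros Homega; assert (1/4 < omega ^ 2 <= 1) by nra.
    repeat split; lra.
Qed.

Lemma Omega_mixed_example :
  params_ok (404/1625) (6/5) (7007/11125) 1 1 (89/25) (1/2) 1 /\
  forall omega,
    inOmega (404/1625) (6/5) (7007/11125) 1 1 (89/25) (1/2) 1 omega <->
    5/7 < omega < 11/13.
Proof.
  split; [unfold params_ok; lra |].
  intros omega; rewrite inOmega_iff_window, Rmax_Rlt.
  unfold Defs.C1, C2_bound, C3_bound, C4_bound, Eval; split.
  - intros (_ & Homega & (Hlow & _) & Hup); split; nra.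
  - intros Homega; assert (25/49 < omega ^ 2 < 121/169) by nra.
    repeat split; lra.
Qed.

Theorem proposition6 :
  (* Omega is a (possibly empty) subinterval of [0,1] *)
  (forall c gamma h d sigma mu b beta,
      params_ok c gamma h d sigma mu b beta ->
      is_interval (inOmega c gamma h d sigma mu b beta))
  /\
  (* Omega = empty: unconditionally unstable *)
  (exists c gamma h d sigma mu b beta,
      params_ok c gamma h d sigma mu b beta /\
      forall omega, ~ inOmega c gamma h d sigma mu b beta omega)
  /\
  (* Omega = [0,1]: unconditionally stable *)
  (exists c gamma h d sigma mu b beta,
      params_ok c gamma h d sigma mu b beta /\
      forall omega, inOmega c gamma h d sigma mu b beta omega <-> 0 <= omega <= 1)
  /\
  (* Omega = [0, wbar) with wbar in (0,1): destabilizing *)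
  (exists c gamma h d sigma mu b beta wbar,
      params_ok c gamma h d sigma mu b beta /\ 0 < wbar < 1 /\
      forall omega, inOmega c gamma h d sigma mu b beta omega <-> 0 <= omega < wbar)
  /\
  (* Omega = (wbar, 1] with wbar in (0,1): stabilizing *)
  (exists c gamma h d sigma mu b beta wbar,
      params_ok c gamma h d sigma mu b beta /\ 0 < wbar < 1 /\
      forall omega, inOmega c gamma h d sigma mu b beta omega <-> wbar < omega <= 1)
  /\
  (* Omega = (wa, wb) with 0 < wa < wb < 1: mixed *)
  (exists c gamma h d sigma mu b beta wa wb,
      params_ok c gamma h d sigma mu b beta /\ 0 < wa /\ wa < wb /\ wb < 1 /\
      forall omega, inOmega c gamma h d sigma mu b beta omega <-> wa < omega < wb).
Proof.
  split; [exact inOmega_is_interval |].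
  split; [eexists _, _, _, _, _, _, _, _; exact Omega_empty_example |].
  split; [eexists _, _, _, _, _, _, _, _; exact Omega_full_example |].
  split.
  { exists (1/10), (1/10), (26/95), 1, 1, (19/5), (1/2), 1, (1/2).
    destruct Omega_destabilizing_example as [Hp HOmega].
    split; [exact Hp |]; split; [lra |]; exact HOmega. }
  split.
  { exists (1/20), (11/10), (353/500), 1, 1, (4/5), (1/2), 1, (1/2).
    destruct Omega_stabilizing_example as [Hp HOmega].
    split; [exact Hp |]; split; [lra |]; exact HOmega. }
  exists (404/1625), (6/5), (7007/11125), 1, 1, (89/25), (1/2), 1, (5/7), (11/13).
  destruct Omega_mixed_example as [Hp HOmega].
  split; [exact Hp |]; do 3 (split; [lra |]); exact HOmega.
Qed.
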